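(* Let $C_0>0$ and $\mathcal{U}_0=e^{C_0}/(1+e^{C_0})^2$. For $m\in\mathcal{M}$, let $$\hat f_m=\arg\min_{t\in \mathcal{S}_m\cap \mathbb{L}_\infty(C_0)}\gamma_n(t),\qquad f_m=\arg\min_{t\in \mathcal{S}_m\cap \mathbb{L}_\infty(C_0)}\gamma(t).$$ Then $$\mathbb{E}_{f_0}\big[\mathcal{K}(\mathbb{P}_{f_0}^{(n)},\mathbb{P}_{\hat f_m}^{(n)})\big]\le \mathcal{K}(\mathbb{P}_{f_0}^{(n)},\mathbb{P}_{f_m}^{(n)})+\frac{D_m}{2n\,\mathcal{U}_0^2}.$$
   Context: Observations $(Y_1,x_1),\dots,(Y_n,x_n)\in\{0,1\}\times\mathcal{X}$ with deterministic design points $x_i$ and independent $Y_i$ satisfying $\mathbb{E}_{f_0}(Y_i)=\pi_{f_0}(x_i)$, where for a function $f:\mathcal{X}\to\mathbb{R}$, $\pi_f(x)=e^{f(x)}/(1+e^{f(x)})$, and $f_0$ is an unknown function. $\mathbb{P}^{(n)}_f$ denotes the law of $(Y_1,\dots,Y_n)$ when $Y_i$ are independent Bernoulli$(\pi_f(x_i))$. The contrast is $\gamma_n(f)=\frac1n\sum_{i=1}^n\{\log(1+e^{f(x_i)})-Y_if(x_i)\}$ and $\gamma(f)=\mathbb{E}_{f_0}[\gamma_n(f)]$. The normalized Kullback–Leibler divergence is $\mathcal{K}(\mathbb{P}_{f_0}^{(n)},\mathbb{P}_{f}^{(n)})=\frac1n\sum_{i=1}^n\big[\pi_{f_0}(x_i)\log\frac{\pi_{f_0}(x_i)}{\pi_f(x_i)}+(1-\pi_{f_0}(x_i))\log\frac{1-\pi_{f_0}(x_i)}{1-\pi_f(x_i)}\big]$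 $(=\gamma(f)-\gamma(f_0))$. A dictionary $\{\phi_1,\dots,\phi_M\}$ of functions $\mathcal{X}\to\mathbb{R}$, orthonormal for the empirical inner product $\langle f,g\rangle_n=\frac1n\sum_{i}f(x_i)g(x_i)$, is fixed; $\mathcal{M}$ is the set of subsets $m\subset\{1,\dots,M\}$, $\mathcal{S}_m=\{\sum_{j\in m}\beta_j\phi_j\}$ and $D_m$ is the dimension of $\mathrm{span}\{\phi_j,j\in m\}$. For $C_0>0$, $\mathbb{L}_\infty(C_0)=\{f:\mathcal{X}\to\mathbb{R}:\max_{1\le i\le n}|f(x_i)|\le C_0\}$. *)

From HB Require Import structures.
From mathcomp Require Import all_boot all_order all_algebra.
From mathcomp Require Import reals.
From mathcomp Require Import sequences exp.
Set Implicit Arguments. Unset Strict Implicit. Unset Printing Implicit Defensive.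
Import Order.TTheory GRing.Theory Num.Theory.
Local Open Scope ring_scope.

Section Logistic.
Variables (R : realType) (X : Type) (n M : nat) (x : 'I_n -> X).

Definition pif (f : X -> R) (z : X) : R := expR (f z) / (1 + expR (f z)).

Definition obs := {ffun 'I_n -> bool}.

Definition gamma_n (Y : obs) (f : X -> R) : R :=
  n%:R^-1 * \sum_(i < n) (ln (1 + expR (f (x i))) - (Y i)%:R * f (x i)).

Definition probY (f0 : X -> R) (Y : obs) : R :=
  \prod_(i < n) (if Y i then pif f0 (x i) else 1 - pif f0 (x i)).

Definition Ef0 (f0 : X -> R) (g : obs -> R) : R :=
  \sum_(Y : obs) probY f0 Y * g Y.

Definition gamma (f0 : X -> R) (f : X -> R) : R := Ef0 f0 (fun Y => gamma_n Y f).

Definition KL (f0 f : X -> R) : R :=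
  n%:R^-1 * \sum_(i < n)
    (pif f0 (x i) * ln (pif f0 (x i) / pif f (x i))
     + (1 - pif f0 (x i)) * ln ((1 - pif f0 (x i)) / (1 - pif f (x i)))).

Definition inner_n (f g : X -> R) : R := n%:R^-1 * \sum_(i < n) f (x i) * g (x i).

Definition orthonormal_dict (phi : 'I_M -> X -> R) : Prop :=
  forall j k, inner_n (phi j) (phi k) = (j == k)%:R.

Definition in_Sm (phi : 'I_M -> X -> R) (m : {set 'I_M}) (f : X -> R) : Prop :=
  exists beta : 'I_M -> R, f = (fun z => \sum_(j in m) beta j * phi j z).

Definition in_Linf (C0 : R) (f : X -> R) : Prop := forall i : 'I_n, `|f (x i)| <= C0.

(* D_m = dimension of span{phi_j, j in m} (as functions evaluated on the design) *)
Definition Dm (phi : 'I_M -> X -> R) (m : {set 'I_M}) : nat :=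
  \rank (\matrix_(j < M, i < n) (if j \in m then phi j (x i) else 0)).

End Logistic.

(* Write [gamma = risk] and [gamma_n = risk - noise], where the noise
   [nu(f) = n^-1 sum_i (Y_i - pi_f0(x_i)) f(x_i)] is linear and centered.  On
   [[-C0, C0]] the function [softplus t = ln (1 + e^t)] is strongly convex with
   modulus [U0], so by orthonormality the risk of [sum_j beta_j phi_j] is
   [U0/8]-strongly midpoint convex in the coefficients.  With [c] the coefficient
   difference of [fhat] and [fm] and [D = risk fhat - risk fm], minimality of [fm]
   (tested at the midpoint) gives [U0 |c|^2 / 8 <= D], and minimality of [fhat]
   gives [D <= nu(fhat - fm) = <c, nu(phi)>]; hence [U0 D <= 8 sum_j nu(phi_j)^2].
   Each [nu(phi_j)] has variance at most [1/(4n)], [|m| <= D_m], and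
   [4 U0 <= 1] turns the resulting [2 D_m / (n U0)] into [D_m / (2 n U0^2)]. *)

From HB Require Import structures.
From mathcomp Require Import all_boot all_order all_algebra.
From mathcomp Require Import reals.
From mathcomp Require Import sequences exp.
From mathcomp Require Import ring lra.
Import Order.TTheory GRing.Theory Num.Theory.
Local Open Scope ring_scope.
Set Implicit Arguments. Unset Strict Implicit.

Section Softplus.
Variable R : realType.
Implicit Types a b c d C : R.

Definition softplus c : R := ln (1 + expR c).

(* the second derivative of [softplus] at [c]; [U_0] is its value at [C_0] *)
Definition logistic_curv c : R := expR c / (1 + expR c) ^+ 2.

Lemma logistic_curv_gt0 c : 0 < logistic_curv c.
Proof. by rewrite divr_gt0 ?expR_gt0 // exprn_gt0 // addr_gt0 ?expR_gt0. Qed.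

Lemma logistic_curv_le_quarter c : 4 * logistic_curv c <= 1.
Proof.
have := expR_gt0 c; have := sqr_ge0 (expR c - 1).
rewrite /logistic_curv mulrA ler_pdivrMr ?exprn_gt0 ?addr_gt0 ?expR_gt0 //; nra.
Qed.

Lemma logistic_curv_ge C c : `|c| <= C -> logistic_curv C <= logistic_curv c.
Proof.
rewrite ler_norml => /andP[Nc_le c_le].
have eC_gt0 := expR_gt0 C; have ec_gt0 := expR_gt0 c.
have ec_le : expR c <= expR C by rewrite ler_expR.
have ecC_ge1 : 1 <= expR c * expR C by rewrite -expRD -expR0 ler_expR; lra.
rewrite /logistic_curv ler_pdivrMr ?exprn_gt0 ?addr_gt0 //.
rewrite mulrAC ler_pdivlMr ?exprn_gt0 ?addr_gt0 //; nra.
Qed.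

Lemma sqr_expRBexpRN_ge d : 2 * d ^+ 2 <= (expR d - expR (- d)) ^+ 2.
Proof.
wlog d_ge0 : d / 0 <= d.
  move=> H; case: (lerP 0 d) => [/H //|d_lt0].
  have /H : 0 <= - d by lra.
  by rewrite opprK sqrrN -[X in _ <= X -> _]sqrrN opprB.
set E := expR d; set F := expR (- d).
have EF : E * F = 1 by rewrite /E /F expRxMexpNx_1.
have E_gt0 : 0 < E by exact: expR_gt0.
have F_gt0 : 0 < F by exact: expR_gt0.
(* [expR d >= (1 + d/2)^2 =: s] gives [E - 1/E >= s - 1/s >= 3d/2]. *)
have half_ge : 1 + d / 2 <= expR (d / 2) by exact: expR_ge1Dx.
have E_ge : (1 + d / 2) ^+ 2 <= E.
  by rewrite /E [d in expR d]splitr expRD expr2 ler_pM //; lra.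
set s := (1 + d / 2) ^+ 2 in E_ge.
have s_ge : 1 + d <= s by rewrite /s; nra.
have EBF_ge : 3 / 2 * d <= E - F.
  have h1 : 0 <= (E - s) * (E + s - 3 / 2 * d) by apply: mulr_ge0; lra.
  have h2 : 0 <= s ^+ 2 - 3 / 2 * d * s - 1 by rewrite /s; nra.
  have : 0 <= E * (E - F - 3 / 2 * d) by nra.
  by rewrite pmulr_rge0 //; lra.
nra.
Qed.

Lemma softplus_midpoint_gap a b :
  (expR (a / 2) - expR (b / 2)) ^+ 2 / ((1 + expR a) * (1 + expR b))
    <= softplus a + softplus b - 2 * softplus ((a + b) / 2).
Proof.
set u := expR (a / 2); set v := expR (b / 2).
have u_gt0 : 0 < u by exact: expR_gt0.
have v_gt0 : 0 < v by exact: expR_gt0.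
have ea : expR a = u ^+ 2 by rewrite expr2 -expRD -splitr.
have eb : expR b = v ^+ 2 by rewrite expr2 -expRD -splitr.
have eab : expR ((a + b) / 2) = u * v by rewrite -expRD mulrDl.
rewrite /softplus ea eb eab.
set P := (1 + u ^+ 2) * (1 + v ^+ 2); set Q := (1 + u * v) ^+ 2.
have pu : 0 < 1 + u ^+ 2 by rewrite addr_gt0 // exprn_gt0.
have pv : 0 < 1 + v ^+ 2 by rewrite addr_gt0 // exprn_gt0.
have puv : 0 < 1 + u * v by rewrite addr_gt0 // mulr_gt0.
have P_gt0 : 0 < P by rewrite mulr_gt0.
have Q_gt0 : 0 < Q by rewrite exprn_gt0.
have -> : ln (1 + u ^+ 2) + ln (1 + v ^+ 2) - 2 * ln (1 + u * v) = - ln (Q / P).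
  by rewrite ln_div ?posrE // lnM ?posrE // /P lnM ?posrE //; lra.
have -> : (u - v) ^+ 2 / P = 1 - Q / P.
  by rewrite /P /Q; field; rewrite !lt0r_neq0.
have : ln (Q / P) <= Q / P - 1.
  by rewrite -[in ln _](subrKC 1 (Q / P)) le_ln1Dx // ltrBrDl subrr divr_gt0.
lra.
Qed.

Lemma expR_mid_sqrB_le a b :
  expR ((a + b) / 2) * (a - b) ^+ 2 / 8 <= (expR (a / 2) - expR (b / 2)) ^+ 2.
Proof.
set d := (a - b) / 4; set w := expR ((a + b) / 4).
have -> : expR ((a + b) / 2) = w ^+ 2 by rewrite /w expr2 -expRD; congr expR; lra.
have -> : expR (a / 2) = w * expR d by rewrite /w /d -expRD; congr expR; lra.
have -> : expR (b / 2) = w * expR (- d) by rewrite /w /d -expRD; congr expR; lra.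
have -> : w ^+ 2 * (a - b) ^+ 2 / 8 = w ^+ 2 * (2 * d ^+ 2) by rewrite /d; field.
rewrite -mulrBr [leRHS]exprMn ler_wpM2l ?sqr_ge0 //.
exact: sqr_expRBexpRN_ge.
Qed.

Lemma logistic_curv_le_mid C a b : `|a| <= C -> `|b| <= C ->
  logistic_curv C <= expR ((a + b) / 2) / ((1 + expR a) * (1 + expR b)).
Proof.
move=> /logistic_curv_ge curv_a /logistic_curv_ge curv_b.
have pa : 0 < 1 + expR a by rewrite addr_gt0 ?expR_gt0.
have pb : 0 < 1 + expR b by rewrite addr_gt0 ?expR_gt0.
have mid_ge0 : 0 <= expR ((a + b) / 2) / ((1 + expR a) * (1 + expR b)).
  by rewrite divr_ge0 ?expR_ge0 // mulr_ge0 // ltW.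
rewrite -ler_sqr ?nnegrE ?(ltW (logistic_curv_gt0 C)) //.
have -> : (expR ((a + b) / 2) / ((1 + expR a) * (1 + expR b))) ^+ 2
    = logistic_curv a * logistic_curv b.
  have e2 : expR ((a + b) / 2) ^+ 2 = expR a * expR b.
    by rewrite expr2 -expRD -splitr expRD.
  by rewrite /logistic_curv expr_div_n e2; field; rewrite !lt0r_neq0.
by rewrite expr2 ler_pM // ltW // logistic_curv_gt0.
Qed.

Lemma softplus_midpoint_strong C a b : `|a| <= C -> `|b| <= C ->
  logistic_curv C * (a - b) ^+ 2 / 8
    <= softplus a + softplus b - 2 * softplus ((a + b) / 2).
Proof.
move=> a_le b_le; apply: le_trans (softplus_midpoint_gap a b).
have P_gt0 : 0 < (1 + expR a) * (1 + expR b) by rewrite mulr_gt0 ?addr_gt0 ?expR_gt0.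
apply: le_trans (_ : expR ((a + b) / 2) / ((1 + expR a) * (1 + expR b))
                       * ((a - b) ^+ 2 / 8) <= _).
  by rewrite -mulrA ler_wpM2r ?divr_ge0 ?sqr_ge0 ?logistic_curv_le_mid.
by rewrite mulrAC mulrA ler_wpM2r ?invr_ge0 ?(ltW P_gt0) ?expR_mid_sqrB_le.
Qed.

End Softplus.

Lemma pif_gt0 (R : realType) (X : Type) (f : X -> R) z : 0 < pif f z.
Proof. by rewrite divr_gt0 ?expR_gt0 // addr_gt0 ?expR_gt0. Qed.

Lemma pif_lt1 (R : realType) (X : Type) (f : X -> R) z : pif f z < 1.
Proof. by rewrite ltr_pdivrMr ?addr_gt0 ?expR_gt0 // mul1r ltrDr. Qed.

Section Expectation.
Variables (R : realType) (X : Type) (n : nat) (x : 'I_n -> X) (f0 : X -> R).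

Let p i := pif f0 (x i).

Lemma probY_ge0 Y : 0 <= probY x f0 Y.
Proof.
apply: prodr_ge0 => i _; case: (Y i); first exact/ltW/pif_gt0.
by rewrite subr_ge0 ltW // pif_lt1.
Qed.

Lemma eq_Ef0 g h : (forall Y, g Y = h Y) -> Ef0 x f0 g = Ef0 x f0 h.
Proof. by move=> gh; apply: eq_bigr => Y _; rewrite gh. Qed.

Lemma Ef0D g h : Ef0 x f0 (fun Y => g Y + h Y) = Ef0 x f0 g + Ef0 x f0 h.
Proof. by rewrite /Ef0 -big_split; apply: eq_bigr => Y _; rewrite mulrDr. Qed.

Lemma Ef0Z c g : Ef0 x f0 (fun Y => c * g Y) = c * Ef0 x f0 g.
Proof. by rewrite /Ef0 mulr_sumr; apply: eq_bigr => Y _; rewrite mulrCA. Qed.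

Lemma Ef0_sum (I : Type) (r : seq I) (P : pred I) (F : I -> obs n -> R) :
  Ef0 x f0 (fun Y => \sum_(k <- r | P k) F k Y) = \sum_(k <- r | P k) Ef0 x f0 (F k).
Proof. by rewrite /Ef0; under eq_bigr do rewrite mulr_sumr; rewrite exchange_big. Qed.

Lemma ler_Ef0 g h : (forall Y, g Y <= h Y) -> Ef0 x f0 g <= Ef0 x f0 h.
Proof. by move=> gh; apply: ler_sum => Y _; rewrite ler_wpM2l ?probY_ge0. Qed.

Lemma Ef0_prod (g : 'I_n -> bool -> R) :
  Ef0 x f0 (fun Y => \prod_i g i (Y i)) = \prod_i (p i * g i true + (1 - p i) * g i false).
Proof.
rewrite /Ef0 /probY.
rewrite (eq_bigr (fun i => \sum_(b : bool) (if b then p i else 1 - p i) * g i b));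
  last by move=> i _; rewrite big_bool.
rewrite bigA_distr_bigA; apply: eq_bigr => Y _.
by rewrite -big_split.
Qed.

Lemma Ef0_cst c : Ef0 x f0 (fun=> c) = c.
Proof.
have total : Ef0 x f0 (fun=> 1) = 1.
  rewrite (@eq_Ef0 _ (fun Y => \prod_i (fun _ _ => 1) i (Y i))); last by move=> Y; rewrite big1.
  by rewrite (Ef0_prod (fun _ _ => 1)) big1 // => i _; rewrite !mulr1 subrKC.
by rewrite -[RHS]mulr1 -total -Ef0Z; apply: eq_Ef0 => Y; rewrite mulr1.
Qed.

Lemma Ef0_obs i : Ef0 x f0 (fun Y => (Y i)%:R) = p i.
Proof.
pose g l (b : bool) : R := if l == i then b%:R else 1.
rewrite (@eq_Ef0 _ (fun Y => \prod_l g l (Y l))); last first.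
  by move=> Y; rewrite /g -big_mkcond /= big_pred1_eq.
rewrite Ef0_prod (bigD1 i) //= big1 => [|l /negbTE l_neq]; rewrite /g ?eqxx ?l_neq.
  by rewrite mulr0 addr0 !mulr1.
by rewrite !mulr1 subrKC.
Qed.

Lemma Ef0_centered_cov i k :
  Ef0 x f0 (fun Y => ((Y i)%:R - p i) * ((Y k)%:R - p k)) =
  if i == k then p i * (1 - p i) else 0.
Proof.
pose e l (b : bool) : R := b%:R - p l.
pose g l (b : bool) : R := (if l == i then e l b else 1) * (if l == k then e l b else 1).
rewrite (@eq_Ef0 _ (fun Y => \prod_l g l (Y l))); last first.
  by move=> Y; rewrite /g big_split /= -!big_mkcond /= !big_pred1_eq.
rewrite Ef0_prod (bigD1 i) //= /g /e eqxx; case: eqP => [<-|_].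
  rewrite big1 => [|l /negbTE ->]; last by rewrite !mulr1 subrKC.
  by rewrite mulr1 /=; ring.
(* for [i != k] the factor at [i] is the mean of the centered [Y i], i.e. 0 *)
by rewrite !mulr1 [X in X * _](_ : _ = 0) ?mul0r //=; ring.
Qed.

Lemma Ef0_sqr_centered_sum (a : 'I_n -> R) :
  Ef0 x f0 (fun Y => (\sum_i ((Y i)%:R - p i) * a i) ^+ 2) =
  \sum_i a i ^+ 2 * (p i * (1 - p i)).
Proof.
rewrite (@eq_Ef0 _ (fun Y => \sum_i \sum_k a i * a k *
    (((Y i)%:R - p i) * ((Y k)%:R - p k)))); last first.
  by move=> Y; rewrite expr2 big_distrlr /=; apply: eq_bigr => i _; apply: eq_bigr => k _; ring.
rewrite Ef0_sum; apply: eq_bigr => i _.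
rewrite Ef0_sum (bigD1 i) //= big1 ?addr0 => [|k k_neq].
  by rewrite Ef0Z Ef0_centered_cov eqxx expr2.
by rewrite Ef0Z Ef0_centered_cov eq_sym (negbTE k_neq) mulr0.
Qed.

End Expectation.

Lemma ln_pif (R : realType) (X : Type) (f : X -> R) z :
  ln (pif f z) = f z - softplus (f z).
Proof. by rewrite ln_div ?posrE ?expR_gt0 ?addr_gt0 ?expR_gt0 // expRK. Qed.

Lemma ln_1Bpif (R : realType) (X : Type) (f : X -> R) z :
  ln (1 - pif f z) = - softplus (f z).
Proof.
have pos : 0 < 1 + expR (f z) by rewrite addr_gt0 ?expR_gt0.
have -> : 1 - pif f z = (1 + expR (f z))^-1 by rewrite /pif; field; rewrite lt0r_neq0.
by rewrite lnV ?posrE.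
Qed.

Definition dict_comb (R : realType) (X : Type) (M : nat) (phi : 'I_M -> X -> R)
  (m : {set 'I_M}) (beta : 'I_M -> R) : X -> R :=
  fun z => \sum_(j in m) beta j * phi j z.

Lemma dict_comb_mid (R : realType) (X : Type) (M : nat) (phi : 'I_M -> X -> R)
    (m : {set 'I_M}) bf bg z :
  dict_comb phi m (fun j => (bf j + bg j) / 2) z
    = (dict_comb phi m bf z + dict_comb phi m bg z) / 2.
Proof. by rewrite /dict_comb -big_split mulr_suml; apply: eq_bigr => j _ /=; ring. Qed.

Section Risk.
Variables (R : realType) (X : Type) (n : nat) (x : 'I_n -> X) (f0 : X -> R).

Definition risk (f : X -> R) : R :=
  n%:R^-1 * \sum_i (softplus (f (x i)) - pif f0 (x i) * f (x i)).

Definition noise (Y : obs n) (f : X -> R) : R :=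
  n%:R^-1 * \sum_i ((Y i)%:R - pif f0 (x i)) * f (x i).

Lemma KL_risk f : KL x f0 f = risk f - risk f0.
Proof.
rewrite /KL /risk -mulrBr -sumrB; congr (_ * _); apply: eq_bigr => i _.
have pos (g : X -> R) : pif g (x i) \in Num.pos by rewrite posrE pif_gt0.
have pos' (g : X -> R) : 1 - pif g (x i) \in Num.pos by rewrite posrE subr_gt0 pif_lt1.
by rewrite (ln_div (pos f0) (pos f)) (ln_div (pos' f0) (pos' f)) !ln_pif !ln_1Bpif; ring.
Qed.

Lemma gamma_risk f : gamma x f0 f = risk f.
Proof.
rewrite /gamma /gamma_n /risk Ef0Z Ef0_sum; congr (_ * _); apply: eq_bigr => i _.
rewrite (@eq_Ef0 _ _ _ x f0 _ (fun Y => softplus (f (x i)) + - f (x i) * (Y i)%:R)).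
  by rewrite Ef0D Ef0_cst Ef0Z Ef0_obs; ring.
by move=> Y; rewrite /softplus; ring.
Qed.

Lemma gamma_n_risk Y f : gamma_n x Y f = risk f - noise Y f.
Proof.
rewrite /gamma_n /risk /noise -mulrBr -sumrB; congr (_ * _).
by apply: eq_bigr => i _; rewrite /softplus; ring.
Qed.

Lemma noise_comb (M : nat) (phi : 'I_M -> X -> R) (m : {set 'I_M}) beta Y :
  noise Y (dict_comb phi m beta) = \sum_(j in m) beta j * noise Y (phi j).
Proof.
rewrite /noise /dict_comb; under eq_bigr do rewrite mulr_sumr.
rewrite exchange_big mulr_sumr; apply: eq_bigr => j _.
by rewrite [RHS]mulrCA; congr (_ * _); rewrite mulr_sumr; apply: eq_bigr => i _; ring.
Qed.

End Risk.

Section Dictionary.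
Variables (R : realType) (X : Type) (n M : nat) (x : 'I_n -> X) (phi : 'I_M -> X -> R).
Variable m : {set 'I_M}.
Hypothesis Hphi : orthonormal_dict x phi.

Lemma mean_sqr_dict_comb c :
  n%:R^-1 * \sum_i dict_comb phi m c (x i) ^+ 2 = \sum_(j in m) c j ^+ 2.
Proof.
under eq_bigr do rewrite expr2 big_distrlr /=.
rewrite exchange_big mulr_sumr; apply: eq_bigr => j jm /=.
rewrite exchange_big mulr_sumr (bigD1 j jm) /= [X in _ + X]big1 ?addr0 => [|k /andP[_ k_neq]].
  have := Hphi j j; rewrite eqxx /= mulr1n /inner_n => phi_jj.
  transitivity (c j ^+ 2 * (n%:R^-1 * \sum_i phi j (x i) * phi j (x i)));
    last by rewrite phi_jj mulr1.
  by rewrite mulrCA; congr (_ * _); rewrite mulr_sumr; apply: eq_bigr => i _; ring.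
have := Hphi j k; rewrite eq_sym (negbTE k_neq) /= mulr0n /inner_n => phi_jk.
transitivity (c j * c k * (n%:R^-1 * \sum_i phi j (x i) * phi k (x i)));
  last by rewrite phi_jk mulr0.
by rewrite mulrCA; congr (_ * _); rewrite mulr_sumr; apply: eq_bigr => i _; ring.
Qed.

(* The rows of the design matrix indexed by [m] are orthogonal with squared norm [n]. *)
Lemma card_le_Dm : (0 < n)%N -> (#|m| <= Dm x phi m)%N.
Proof.
move=> n_gt0; rewrite /Dm; set A := \matrix_(j < M, i < n) _.
pose e : 'I_#|m| -> 'I_M := enum_val; pose B := rowsub e A.
have n_neq0 : (n%:R : R) != 0 by rewrite pnatr_eq0 -lt0n.
have BBt : B *m B^T = (n%:R : R)%:M.
  apply/matrixP => k l; rewrite !mxE.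
  under eq_bigr do rewrite !mxE !enum_valP.
  have := Hphi (e k) (e l); rewrite /inner_n => phi_kl.
  have -> : \sum_i phi (e k) (x i) * phi (e l) (x i) = n%:R * (e k == e l)%:R.
    by rewrite -phi_kl mulrA mulfV // mul1r.
  by rewrite (inj_eq enum_val_inj) mulr_natr.
have <- : \rank (B *m B^T) = #|m| by rewrite BBt -scalemx1 mxrank_scale_nz // mxrank1.
by apply: leq_trans (mxrankM_maxl _ _) _; apply: mxrankS; exact: rowsub_sub.
Qed.

Lemma Ef0_sqr_noise_le f0 j :
  Ef0 x f0 (fun Y => noise x f0 Y (phi j) ^+ 2) <= (4 * n%:R)^-1.
Proof.
rewrite (@eq_Ef0 _ _ _ x f0 _ (fun Y => n%:R^-1 ^+ 2 *
   (\sum_i ((Y i)%:R - pif f0 (x i)) * phi j (x i)) ^+ 2)); last first.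
  by move=> Y; rewrite /noise exprMn.
rewrite Ef0Z Ef0_sqr_centered_sum.
have phi_jj := Hphi j j; rewrite eqxx /= mulr1n /inner_n in phi_jj.
(* a Bernoulli variance [p (1 - p)] is at most [1/4] *)
apply: le_trans (_ : n%:R^-1 ^+ 2 * \sum_i (phi j (x i) ^+ 2 / 4) <= _).
  rewrite ler_wpM2l ?exprn_ge0 ?invr_ge0 //; apply: ler_sum => i _.
  by rewrite ler_wpM2l ?sqr_ge0 //; have := sqr_ge0 (pif f0 (x i) - 1 / 2); nra.
suff -> : n%:R^-1 ^+ 2 * \sum_i (phi j (x i) ^+ 2 / 4)
    = (4 * n%:R)^-1 * (n%:R^-1 * \sum_i phi j (x i) * phi j (x i)) by rewrite phi_jj mulr1.
by rewrite -mulr_suml (eq_bigr _ (fun i _ => expr2 _)) invfM; ring.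
Qed.

Lemma Ef0_noise_energy_le f0 :
  Ef0 x f0 (fun Y => \sum_(j in m) noise x f0 Y (phi j) ^+ 2)
    <= (Dm x phi m)%:R / (4 * n%:R).
Proof.
rewrite Ef0_sum; apply: le_trans (ler_sum _ (fun j _ => Ef0_sqr_noise_le f0 j)) _.
rewrite sumr_const -(mulr_natr (4 * n%:R)^-1) mulrC.
have [n0|n_gt0] := posnP n.
  by rewrite (_ : n%:R = 0 :> R) ?n0 // mulr0 invr0 !mulr0.
by rewrite ler_wpM2r ?invr_ge0 ?mulr_ge0 // ler_nat card_le_Dm.
Qed.

Lemma risk_midpoint_gap f0 C0 bf bg :
  in_Linf x C0 (dict_comb phi m bf) -> in_Linf x C0 (dict_comb phi m bg) ->
  logistic_curv C0 / 8 * \sum_(j in m) (bf j - bg j) ^+ 2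
    <= risk x f0 (dict_comb phi m bf) + risk x f0 (dict_comb phi m bg)
       - 2 * risk x f0 (dict_comb phi m (fun j => (bf j + bg j) / 2)).
Proof.
set f := dict_comb phi m bf; set g := dict_comb phi m bg => f_le g_le.
have comb_sub z : dict_comb phi m (fun j => bf j - bg j) z = f z - g z.
  by rewrite /f /g /dict_comb -sumrB; apply: eq_bigr => j _ /=; ring.
(* the linear parts of the three risks cancel *)
have -> : risk x f0 f + risk x f0 g - 2 * risk x f0 (dict_comb phi m (fun j => (bf j + bg j) / 2))
    = n%:R^-1 * \sum_i (softplus (f (x i)) + softplus (g (x i))
                        - 2 * softplus ((f (x i) + g (x i)) / 2)).
  rewrite /risk; set A := \sum_i _; set B := \sum_i _; set C := \sum_i _.
  transitivity (n%:R^-1 * (A + B - 2 * C)); first by ring.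
  congr (_ * _); rewrite /A /B /C mulr_sumr -big_split -sumrB; apply: eq_bigr => i _.
  by rewrite dict_comb_mid -/f -/g /=; field.
rewrite -(mean_sqr_dict_comb (fun j => bf j - bg j)) mulrCA ler_wpM2l ?invr_ge0 //.
rewrite mulr_sumr; apply: ler_sum => i _; rewrite comb_sub mulrAC.
exact: softplus_midpoint_strong.
Qed.

Lemma excess_risk_le_noise f0 C0 Y fh fm :
  in_Sm phi m fh -> in_Linf x C0 fh ->
  (forall t, in_Sm phi m t -> in_Linf x C0 t -> gamma_n x Y fh <= gamma_n x Y t) ->
  in_Sm phi m fm -> in_Linf x C0 fm ->
  (forall t, in_Sm phi m t -> in_Linf x C0 t -> gamma x f0 fm <= gamma x f0 t) ->
  logistic_curv C0 * (risk x f0 fh - risk x f0 fm)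
    <= 8 * \sum_(j in m) noise x f0 Y (phi j) ^+ 2.
Proof.
move=> [bh ->] fh_le fh_opt [bm ->] fm_le fm_opt.
rewrite -/(dict_comb phi m bh) -/(dict_comb phi m bm) in fh_le fh_opt fm_le fm_opt *.
set U := logistic_curv C0; set D := risk _ _ _ - _.
set S := \sum_(j in m) (bm j - bh j) ^+ 2; set V := \sum_(j in m) _.
set T := \sum_(j in m) (bh j - bm j) * noise x f0 Y (phi j).
have U_gt0 : 0 < U by exact: logistic_curv_gt0.
have mid_le : in_Linf x C0 (dict_comb phi m (fun j => (bm j + bh j) / 2)).
  move=> i; have := fm_le i; have := fh_le i; rewrite dict_comb_mid !ler_norml /dict_comb.
  by move=> /andP[? ?] /andP[? ?]; apply/andP; split; lra.
have fm_le_mid : risk x f0 (dict_comb phi m bm)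
    <= risk x f0 (dict_comb phi m (fun j => (bm j + bh j) / 2)).
  by rewrite -!gamma_risk; apply: fm_opt => //; eexists.
have S_le : U / 8 * S <= D.
  by have := risk_midpoint_gap f0 fm_le fh_le; rewrite -/U -/S /D; lra.
have D_le : D <= T.
  have := fh_opt (dict_comb phi m bm) (ex_intro _ bm erefl) fm_le.
  rewrite !(gamma_n_risk _ f0) !noise_comb -/D /T.
  by under [in X in _ -> X]eq_bigr do rewrite mulrBl; rewrite sumrB /D; lra.
(* AM-GM, termwise: [16 U c nu <= U^2 c^2 + 64 nu^2] *)
have amgm : 16 * (U * T) <= U * (U * S) + 64 * V.
  rewrite /T /S /V !mulr_sumr -big_split; apply: ler_sum => j _ /=.
  have := sqr_ge0 (U * (bh j - bm j) - 8 * noise x f0 Y (phi j)).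
  by rewrite -(sqrrN (bm j - bh j)) opprB; nra.
have : U * (U * S) <= U * (8 * D) by rewrite ler_wpM2l ?(ltW U_gt0) //; lra.
have : U * D <= U * T by rewrite ler_wpM2l ?(ltW U_gt0).
lra.
Qed.

End Dictionary.

Unset Implicit Arguments. Set Strict Implicit.

Theorem proposition3p1 (R : realType) (X : Type) (n M : nat) (x : 'I_n -> X)
    (phi : 'I_M -> X -> R) (f0 : X -> R) (C0 : R) (m : {set 'I_M})
    (fhat : obs n -> X -> R) (fm : X -> R) :
  orthonormal_dict x phi ->
  0 < C0 ->
  (forall Y : obs n,
     in_Sm phi m (fhat Y) /\ in_Linf x C0 (fhat Y) /\
     (forall t, in_Sm phi m t -> in_Linf x C0 t ->
        gamma_n x Y (fhat Y) <= gamma_n x Y t)) ->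
  (in_Sm phi m fm /\ in_Linf x C0 fm /\
     (forall t, in_Sm phi m t -> in_Linf x C0 t ->
        gamma x f0 fm <= gamma x f0 t)) ->
  let U0 := expR C0 / (1 + expR C0) ^+ 2 in
  Ef0 x f0 (fun Y => KL x f0 (fhat Y))
    <= KL x f0 fm + (Dm x phi m)%:R / (2 * n%:R * U0 ^+ 2).
Proof.
move=> Hphi _ fhat_opt [Sfm [Lfm fm_opt]]; rewrite /= -/(logistic_curv C0).
have per_sample Y : logistic_curv C0 * (risk x f0 (fhat Y) - risk x f0 fm)
    <= 8 * \sum_(j in m) noise x f0 Y (phi j) ^+ 2.
  by case: (fhat_opt Y) => [Sh [Lh h_opt]];
    exact: (excess_risk_le_noise Hphi Sh Lh h_opt Sfm Lfm fm_opt).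
set U := logistic_curv C0; pose B : R := (Dm x phi m)%:R / n%:R.
have U_gt0 : 0 < U := logistic_curv_gt0 C0.
have U_le : 4 * U <= 1 := logistic_curv_le_quarter C0.
have B_ge0 : 0 <= B by rewrite divr_ge0.
have mean_excess : U * Ef0 x f0 (fun Y => risk x f0 (fhat Y) - risk x f0 fm) <= 2 * B.
  rewrite -Ef0Z; apply: le_trans; first by apply: ler_Ef0 => Y; exact: per_sample.
  rewrite Ef0Z; apply: le_trans (ler_wpM2l _ (Ef0_noise_energy_le m Hphi f0)) _ => //.
  by rewrite /B invfM; lra.
rewrite (@eq_Ef0 _ _ _ x f0 _ (fun Y => (risk x f0 (fhat Y) - risk x f0 fm) + KL x f0 fm));
  last first.
  by move=> Y; rewrite !KL_risk; ring.
rewrite Ef0D Ef0_cst addrC lerD2l.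
rewrite (_ : _ / (2 * n%:R * U ^+ 2) = B / (2 * U ^+ 2)); last by rewrite /B !invfM; ring.
rewrite ler_pdivlMr; last by rewrite mulr_gt0 // exprn_gt0.
set E := Ef0 _ _ _ in mean_excess *.
have : U * (U * E) <= U * (2 * B) by rewrite ler_wpM2l ?(ltW U_gt0).
have : 4 * U * B <= 1 * B by rewrite ler_wpM2r.
by rewrite expr2; lra.
Qed.
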